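(* Let $X\subseteq\mathbb{P}^n$ be a real non-degenerate closed subscheme and let $p\geq 1$ be an integer. If $X$ satisfies the $p$-base-point-free property, then the Hankel index satisfies $\eta(X)\geq p+1$.
   Context: Let $S=\mathbb{R}[x_0,\dots,x_n]$, $S_d$ its degree-$d$ part. For a closed subscheme $X\subseteq\mathbb{P}^n$ over $\mathbb{R}$ (points taken over $\mathbb{C}$, real points $X(\mathbb{R})$), $I=I(X)\subseteq S$ is its saturated homogeneous ideal and $R=S/I$ its homogeneous coordinate ring. $X$ is non-degenerate if it is not contained in a hyperplane. $\Sigma_X\subseteq R_2$ is the cone of sums of squares of elements of $R_1$ and $\Sigma_X^*\subseteq R_2^*$ its dual cone, regarded inside $S_2^*$ via the dual of the quotient map $S_2\to R_2$. For $\ell\in S_2^*$ let $B_\ell$ be the symmetric bilinear form $(f,g)\mapsto \ell(fg)$ on $S_1$; the rank of $\ell$ is the rank of $B_\ell$. With $S_+$ the cone of $\ell\in S_2^*$ with $B_\ell$ positive semidefinite, $\Sigma_X^*=S_+\cap I_2^\perp$ (the Hankel spectrahedron of $X$). The rank of an extreme ray is the rank of any nonzero element spanning it. The Hankel index $\eta(X)$ is the smallest integer $p>1$ such that $\Sigma_X^*$ has an extreme ray of rank $p$; $\eta(X)=\infty$ if all extreme rays of $\Sigma_X^*$ have rank $1$. A linear series is a vector subspace $W\subseteq R_1$; it is base-point-free on $X$ if the forms in $W$ have no common zero on $X$ (over $\mathbb{C}$). $X$ satisfies the $p$-base-point-free property if for every base-point-free linear series $W\subseteq R_1$ of codimension at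 most $p$ in $R_1$, the ideal of $R$ generated by $W$ contains $R_2$. *)

From HB Require Import structures.
From mathcomp Require Import all_boot all_order all_algebra.
Set Implicit Arguments. Unset Strict Implicit. Unset Printing Implicit Defensive.
Import Order.TTheory GRing.Theory Num.Theory.
Local Open Scope ring_scope.

(* mpoly R m = R[x_0, ..., x_{m-1}], with x_{m-1} the outermost variable. *)
Fixpoint mpoly (R : comNzRingType) (m : nat) : comNzRingType :=
  match m with
  | 0 => R
  | k.+1 => ({poly mpoly R k} : comNzRingType)
  end.

Fixpoint mconst (R : comNzRingType) (m : nat) : R -> mpoly R m :=
  match m return R -> mpoly R m with
  | 0 => fun c => c
  | k.+1 => fun c => (@mconst R k c)%:P
  end.

Fixpoint mvar (R : comNzRingType) (m : nat) (i : nat) : mpoly R m :=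
  match m return mpoly R m with
  | 0 => 0
  | k.+1 => if i == k then 'X else (@mvar R k i)%:P
  end.

Fixpoint hcomp (R : comNzRingType) (m : nat) (d : nat) : mpoly R m -> mpoly R m :=
  match m return mpoly R m -> mpoly R m with
  | 0 => fun p => if d == 0%N then p else 0
  | k.+1 => fun p : {poly mpoly R k} =>
      \poly_(i < size p) (if (i <= d)%N then @hcomp R k (d - i)%N p`_i else 0)
  end.

(* p is homogeneous of degree d (the zero polynomial is homogeneous of every degree) *)
Definition mhomog (R : comNzRingType) (m d : nat) (p : mpoly R m) : Prop :=
  hcomp d p = p.

Fixpoint meval (R : comNzRingType) (C : comNzRingType) (phi : R -> C)
    (m : nat) (z : nat -> C) : mpoly R m -> C :=
  match m return mpoly R m -> C with
  | 0 => fun c => phi c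
  | k.+1 => fun p : {poly mpoly R k} => \sum_(i < size p) @meval R C phi k z p`_i * z k ^+ i
  end.

Section Proj.
Variables (R : rcfType) (n : nat).

Definition Spoly := mpoly R n.+1.
Definition xv (i : nat) : Spoly := mvar R n.+1 i.

(* the linear form sum_i a_i x_i attached to a coefficient vector a (S_1 = R^(n+1)) *)
Definition linform (a : 'rV[R]_n.+1) : Spoly :=
  \sum_(i < n.+1) mconst n.+1 (a 0 i) * xv i.

Definition is_ideal (I : Spoly -> Prop) : Prop :=
  [/\ I 0, (forall f g, I f -> I g -> I (f + g)) & (forall f g, I f -> I (g * f))].

Definition is_homogeneous_ideal (I : Spoly -> Prop) : Prop :=
  is_ideal I /\ (forall f d, I f -> I (hcomp d f)).

(* m^k, m = (x_0,...,x_n): polynomials with no monomial of degree < k *)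
Definition in_irrel_pow (k : nat) (g : Spoly) : Prop :=
  forall d, (d < k)%N -> hcomp d g = 0.

(* I is saturated: (I : m^infty) = I *)
Definition is_saturated (I : Spoly -> Prop) : Prop :=
  forall f, (exists k, forall g, in_irrel_pow k g -> I (f * g)) -> I f.

(* I is the (saturated homogeneous) ideal I(X) of a closed subscheme X of P^n;
   closed subschemes correspond bijectively to such ideals *)
Definition is_subscheme_ideal (I : Spoly -> Prop) : Prop :=
  is_homogeneous_ideal I /\ is_saturated I.

(* X non-degenerate: no nonzero linear form in I(X), i.e. I_1 = 0 *)
Definition nondegenerate_scheme (I : Spoly -> Prop) : Prop :=
  forall a : 'rV[R]_n.+1, I (linform a) -> a = 0.

Definition point_of (C : closedFieldType) (phi : {rmorphism R -> C})
    (I : Spoly -> Prop) (z : 'I_n.+1 -> C) : Prop :=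
  (exists i, z i != 0) /\
  forall f, I f -> @meval _ _ phi n.+1 (fun k => if (k < n.+1)%N then z (inord k) else 0) f = 0.

(* a linear series W (a subspace of R_1 = S_1) is base-point-free on X over C *)
Definition base_point_free (C : closedFieldType) (phi : {rmorphism R -> C})
    (I : Spoly -> Prop) (W : {vspace 'rV[R]_n.+1}) : Prop :=
  forall z, point_of phi I z ->
    exists2 w, w \in W &
      @meval _ _ phi n.+1 (fun k => if (k < n.+1)%N then z (inord k) else 0) (linform w) != 0.

(* the ideal of R = Spoly/I generated by W contains R_2, i.e. S_2 is contained in (W) + I *)
Definition ideal_gen_contains_R2 (I : Spoly -> Prop) (W : {vspace 'rV[R]_n.+1}) : Prop :=
  forall q : Spoly, mhomog 2 q ->
    exists s : seq ('rV[R]_n.+1 * Spoly),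
      (forall t, t \in s -> t.1 \in W) /\
      I (q - \sum_(t <- s) linform t.1 * t.2).

(* p-base-point-free property (R_1 = S_1 since X is non-degenerate) *)
Definition p_bpf_property (C : closedFieldType) (phi : {rmorphism R -> C})
    (I : Spoly -> Prop) (p : nat) : Prop :=
  forall W : {vspace 'rV[R]_n.+1},
    (n.+1 - \dim W <= p)%N -> base_point_free phi I W -> ideal_gen_contains_R2 I W.

(* an element of S_2^* is represented by a map Spoly -> R that is linear on S_2;
   only its values on S_2 matter (equality of functionals is eq2) *)
Definition hom2 (q : Spoly) : Prop := mhomog 2 q.

Definition is_dual2 (l : Spoly -> R) : Prop :=
  (forall q1 q2, hom2 q1 -> hom2 q2 -> l (q1 + q2) = l q1 + l q2) /\
  (forall c q, hom2 q -> l (mconst n.+1 c * q) = c * l q).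

Definition eq2 (l1 l2 : Spoly -> R) : Prop := forall q, hom2 q -> l1 q = l2 q.

(* matrix of the bilinear form B_l on S_1 in the basis x_0,...,x_n *)
Definition Bmx (l : Spoly -> R) : 'M[R]_n.+1 := \matrix_(i, j) l (xv i * xv j).

Definition rank_of (l : Spoly -> R) : nat := \rank (Bmx l).

(* Sigma_X^* : dual cone of the cone of sums of squares of linear forms in R_2,
   regarded inside S_2^* (functionals vanishing on I_2) *)
Definition in_sos_dual (I : Spoly -> Prop) (l : Spoly -> R) : Prop :=
  [/\ is_dual2 l,
      (forall q, hom2 q -> I q -> l q = 0) &
      (forall s : seq 'rV[R]_n.+1, 0 <= l (\sum_(a <- s) linform a ^+ 2))].

Definition extreme_ray (I : Spoly -> Prop) (l : Spoly -> R) : Prop :=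
  [/\ in_sos_dual I l,
      ~ eq2 l (fun _ => 0) &
      (forall l1 l2, in_sos_dual I l1 -> in_sos_dual I l2 ->
         eq2 l (fun q => l1 q + l2 q) ->
         exists2 c, 0 <= c & eq2 l1 (fun q => c * l q))].

(* eta(X) >= k, where eta(X) = min {r > 1 | Sigma_X^* has an extreme ray of rank r}
   (and eta(X) = infinity if there is none) *)
Definition hankel_index_ge (I : Spoly -> Prop) (k : nat) : Prop :=
  forall r : nat, (1 < r)%N ->
    (exists l, extreme_ray I l /\ rank_of l = r) -> (k <= r)%N.

End Proj.

From HB Require Import structures.
From mathcomp Require Import all_boot all_order all_algebra.
From mathcomp Require Import zify ring lra.
From Stdlib Require Import Classical ClassicalEpsilon.
Set Implicit Arguments. Unset Strict Implicit. Unset Printing Implicit Defensive.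
Import Order.TTheory GRing.Theory Num.Theory.
Local Open Scope ring_scope.

(* Suppose l spans an extreme ray of the Hankel spectrahedron with 1 < rank l <= p,
   and let W be the kernel of its Gram matrix B_l, a linear series of codimension
   rank l.  W is base-point-free: if z were a common zero of I and W, then every
   quadratic form of I_2 + W S_1 vanishes at z; a linear functional m separating
   from this subspace a form q with q(z) <> 0 kills the kernel of B_l, so l + e m
   and l - e m remain in the cone for small e > 0, and extremality gives m(q) = 0
   whenever l(q) = 0.  Hence every quadratic zero of l vanishes at z, which makes
   B_l proportional to z^T z, of rank at most one.  The p-base-point-free property
   then gives S_2 in (W) + I, on all of which l vanishes: a contradiction. *)

(** * Homogeneous components and evaluation of iterated polynomials *)

Section MpolyTheory.
Variable R : comNzRingType.

Lemma mconst_poly k c : mconst k.+1 c = (@mconst R k c)%:P.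
Proof. by []. Qed.

Lemma mconstD m a b : mconst m (a + b) = mconst m a + mconst m b :> mpoly R m.
Proof. by elim: m => [|k IH] //=; rewrite IH polyCD. Qed.

Lemma mconstM m a b : mconst m (a * b) = mconst m a * mconst m b :> mpoly R m.
Proof. by elim: m => [|k IH] //=; rewrite IH polyCM. Qed.

Lemma mconstN m a : mconst m (- a) = - mconst m a :> mpoly R m.
Proof. by elim: m => [|k IH] //=; rewrite IH polyCN. Qed.

Lemma mconst0 m : mconst m 0 = 0 :> mpoly R m.
Proof. by elim: m => [|k IH] //=; rewrite IH. Qed.

Lemma mconst1 m : mconst m 1 = 1 :> mpoly R m.
Proof. by elim: m => [|k IH] //=; rewrite IH. Qed.

Lemma mvar_last k : mvar R k.+1 k = 'X.
Proof. by rewrite /= eqxx. Qed.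

Lemma mvar_lt k i : (i < k)%N -> mvar R k.+1 i = (mvar R k i)%:P.
Proof. by move=> lt_ik; rewrite /= ifN // neq_ltn lt_ik. Qed.

Lemma hcomp0 m d : @hcomp R m d 0 = 0.
Proof. by case: m => [|k] /=; [case: eqP | rewrite size_poly0 poly_def big_ord0]. Qed.

Lemma coef_hcomp k d (p : mpoly R k.+1) j :
  (hcomp d p)`_j = if (j <= d)%N then hcomp (d - j) p`_j else 0.
Proof.
rewrite /= coef_poly; case: ltnP => // le_size_j.
by rewrite nth_default // hcomp0; case: ifP.
Qed.

Lemma hcompD m d (f g : mpoly R m) : hcomp d (f + g) = hcomp d f + hcomp d g.
Proof.
elim: m d f g => [|k IH] d f g; first by rewrite /=; case: eqP; rewrite ?addr0.
apply/polyP => j; rewrite coefD !coef_hcomp coefD.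
by case: ifP => _; rewrite ?IH ?addr0.
Qed.

Lemma hcompN m d (f : mpoly R m) : hcomp d (- f) = - hcomp d f.
Proof. by apply/eqP; rewrite -subr_eq0 opprK -hcompD addNr hcomp0. Qed.

Lemma hcompB m d (f g : mpoly R m) : hcomp d (f - g) = hcomp d f - hcomp d g.
Proof. by rewrite hcompD hcompN. Qed.

Lemma hcomp_sum m d (I : Type) (s : seq I) (F : I -> mpoly R m) :
  hcomp d (\sum_(t <- s) F t) = \sum_(t <- s) hcomp d (F t).
Proof.
elim: s => [|a s IH]; first by rewrite !big_nil hcomp0.
by rewrite !big_cons hcompD IH.
Qed.

Lemma hcomp_mconstM m d c (f : mpoly R m) :
  hcomp d (mconst m c * f) = mconst m c * hcomp d f.
Proof.
elim: m d f => [|k IH] d f; first by rewrite /=; case: eqP; rewrite ?mulr0.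
apply/polyP => j; rewrite mconst_poly coefCM !coef_hcomp coefCM.
by case: ifP => _; rewrite ?IH ?mulr0.
Qed.

Lemma hcomp_id m d (f : mpoly R m) : hcomp d (hcomp d f) = hcomp d f.
Proof.
elim: m d f => [|k IH] d f; first by rewrite /=; case: eqP.
apply/polyP => j; rewrite !coef_hcomp.
by case: (j <= d)%N; rewrite ?IH ?hcomp0.
Qed.

Lemma hcomp0_mconst m c : hcomp 0 (mconst m c) = mconst m c :> mpoly R m.
Proof.
elim: m => [|k IH] //; apply/polyP => j; rewrite coef_hcomp mconst_poly coefC.
by case: j => [|j] //=; rewrite IH.
Qed.

Lemma hcomp_mvarM m i d (f : mpoly R m) : (i < m)%N ->
  hcomp d.+1 (mvar R m i * f) = mvar R m i * hcomp d f /\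
  hcomp 0 (mvar R m i * f) = 0.
Proof.
elim: m i d f => [|k IH] i d f //; rewrite ltnS leq_eqVlt => /orP[/eqP->|lt_ik].
  rewrite mvar_last; split; apply/polyP => j; rewrite coef_hcomp coefXM ?coefXM.
    case: j => [|j] /=; first by rewrite hcomp0.
    by rewrite coef_hcomp ltnS subSS.
  by case: j => [|j] /=; rewrite coef0 ?hcomp0.
rewrite mvar_lt //; split; apply/polyP => j; rewrite coef_hcomp coefCM ?coefCM.
  rewrite coef_hcomp; case: (leqP j d) => le_jd.
    by rewrite (leq_trans le_jd (leqnSn d)) subSn // (proj1 (IH _ _ _ lt_ik)).
  rewrite mulr0; case: (eqVneq j d.+1) => [->|ne_j].
    by rewrite leqnn subnn (proj2 (IH _ d _ lt_ik)).
  by have -> : (j <= d.+1)%N = false by lia.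
by case: j => [|j] //=; rewrite coef0 // (proj2 (IH _ d _ lt_ik)).
Qed.

Lemma mhomogD m d (f g : mpoly R m) : mhomog d f -> mhomog d g -> mhomog d (f + g).
Proof. by rewrite /mhomog hcompD => -> ->. Qed.

Lemma mhomogN m d (f : mpoly R m) : mhomog d f -> mhomog d (- f).
Proof. by rewrite /mhomog hcompN => ->. Qed.

Lemma mhomogB m d (f g : mpoly R m) : mhomog d f -> mhomog d g -> mhomog d (f - g).
Proof. by move=> hf hg; apply: mhomogD => //; apply: mhomogN. Qed.

Lemma mhomog0 m d : mhomog d (0 : mpoly R m).
Proof. by rewrite /mhomog hcomp0. Qed.

Lemma mhomog_mconstM m d c (f : mpoly R m) : mhomog d f -> mhomog d (mconst m c * f).
Proof. by rewrite /mhomog hcomp_mconstM => ->. Qed.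

Lemma mhomog_sum m d (I : Type) (s : seq I) (F : I -> mpoly R m) :
  (forall t, mhomog d (F t)) -> mhomog d (\sum_(t <- s) F t).
Proof.
move=> hF; elim: s => [|a s IH]; first by rewrite big_nil; apply: mhomog0.
by rewrite big_cons; apply: mhomogD.
Qed.

Lemma mhomog_hcomp m d (f : mpoly R m) : mhomog d (hcomp d f).
Proof. exact: hcomp_id. Qed.

Lemma mhomog0_mconst m c : mhomog 0 (mconst m c : mpoly R m).
Proof. exact: hcomp0_mconst. Qed.

Lemma mhomog_mvarM m i d (f : mpoly R m) :
  (i < m)%N -> mhomog d f -> mhomog d.+1 (mvar R m i * f).
Proof. by move=> lt_im; rewrite /mhomog (proj1 (hcomp_mvarM _ _ lt_im)) => ->. Qed.

Lemma coef_mhomog k d (p : mpoly R k.+1) : mhomog d p ->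
  forall j, p`_j = if (j <= d)%N then hcomp (d - j) p`_j else 0.
Proof. by move=> hp j; rewrite -{1}hp coef_hcomp. Qed.

Lemma mhomog_polyC k d (h : mpoly R k) : mhomog d h -> mhomog d (h%:P : mpoly R k.+1).
Proof.
move=> hh; apply/polyP => j; rewrite coef_hcomp coefC.
by case: j => [|j] /=; rewrite ?subn0 ?hh //; case: ifP; rewrite ?hcomp0.
Qed.

Lemma mhomog0P m (u : mpoly R m) : mhomog 0 u -> exists c, u = mconst m c.
Proof.
elim: m u => [|k IH] u hu; first by exists u.
have hu0 : mhomog 0 (u`_0 : mpoly R k).
  by have := coef_mhomog hu 0; rewrite leqnn subnn => e; rewrite /mhomog -e.
have [c hc] := IH _ hu0; exists c; rewrite mconst_poly -hc.
by apply/polyP => j; rewrite coefC (coef_mhomog hu j); case: j.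
Qed.

Lemma mhomogS_decomp m d (u : mpoly R m) : mhomog d.+1 u ->
  exists h : nat -> mpoly R m, (forall i, mhomog d (h i)) /\
    u = \sum_(i < m) mvar R m i * h i.
Proof.
elim: m u => [|k IH] u hu.
  exists (fun _ => 0); split => [i|]; first exact: mhomog0.
  by rewrite big_ord0 -hu.
have hu0 : mhomog d.+1 (u`_0 : mpoly R k).
  by have := coef_mhomog hu 0; rewrite leq0n subn0 => e; rewrite /mhomog -e.
have [h [hh hs]] := IH _ hu0.
pose u' : mpoly R k.+1 := \poly_(j < size u) u`_j.+1.
have coef_u' j : u'`_j = u`_j.+1.
  rewrite coef_poly; case: ltnP => // le_size_j.
  by rewrite nth_default // (leq_trans le_size_j).
have hu' : mhomog d u'.
  apply/polyP => j; rewrite coef_hcomp !coef_u' (coef_mhomog hu j.+1) ltnS subSS.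
  by case: (j <= d)%N; rewrite ?hcomp_id.
exists (fun i => if (i < k)%N then (h i)%:P else u'); split.
  by move=> i; case: ifP => _ //; apply: mhomog_polyC.
rewrite big_ord_recr /= ltnn eqxx.
have -> : \sum_(i < k) (if (i : nat) == k then 'X else (mvar R k i)%:P) *
     (if (i < k)%N then (h i)%:P else u') = (u`_0)%:P.
  rewrite hs rmorph_sum; apply: eq_bigr => i _.
  by rewrite ltn_ord (ltn_eqF (ltn_ord i)) rmorphM.
apply/polyP => j; rewrite coefD coefXM coefC.
by case: j => [|j] /=; rewrite ?addr0 // add0r coef_u'.
Qed.

Section Eval.
Variables (C : comNzRingType) (phi : {rmorphism R -> C}) (z : nat -> C).

Lemma meval_poly k (p : mpoly R k.+1) :
  meval phi z p = (map_poly (@meval R C phi k z) p).[z k].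
Proof.
rewrite (@horner_coef_wide _ (size p)); last by rewrite size_poly.
by apply: eq_bigr => i _; rewrite coef_poly ltn_ord.
Qed.

Lemma meval0 m : meval phi z (0 : mpoly R m) = 0.
Proof. by case: m => [|k] /=; rewrite ?rmorph0 // size_poly0 big_ord0. Qed.

Lemma mevalD m (f g : mpoly R m) : meval phi z (f + g) = meval phi z f + meval phi z g.
Proof.
elim: m f g => [|k IH] f g; first by rewrite /= rmorphD.
rewrite !meval_poly -hornerD; congr (_.[_]); apply/polyP => i.
by rewrite coefD !coef_map_id0 ?meval0 // coefD IH.
Qed.

Lemma mevalN m (f : mpoly R m) : meval phi z (- f) = - meval phi z f.
Proof. by apply/eqP; rewrite -subr_eq0 opprK -mevalD addNr meval0. Qed.

Lemma mevalB m (f g : mpoly R m) : meval phi z (f - g) = meval phi z f - meval phi z g.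
Proof. by rewrite mevalD mevalN. Qed.

Lemma meval_sum m (I : Type) (s : seq I) (F : I -> mpoly R m) :
  meval phi z (\sum_(t <- s) F t) = \sum_(t <- s) meval phi z (F t).
Proof.
elim: s => [|a s IH]; first by rewrite !big_nil meval0.
by rewrite !big_cons mevalD IH.
Qed.

Lemma mevalM m (f g : mpoly R m) : meval phi z (f * g) = meval phi z f * meval phi z g.
Proof.
elim: m f g => [|k IH] f g; first by rewrite /= rmorphM.
rewrite !meval_poly -hornerM; congr (_.[_]); apply/polyP => i.
rewrite coefM !coef_map_id0 ?meval0 // coefM meval_sum.
by apply: eq_bigr => j _; rewrite IH !coef_map_id0 ?meval0.
Qed.

Lemma meval_polyC k (c : mpoly R k) :
  meval phi z (c%:P : mpoly R k.+1) = meval phi z c.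
Proof.
rewrite [LHS]/= size_polyC; case: (eqVneq c 0) => [->|_] /=.
  by rewrite big_ord0 meval0.
by rewrite big_ord1 coefC /= expr0 mulr1.
Qed.

Lemma meval_mconst m c : meval phi z (mconst m c) = phi c.
Proof. by elim: m => [|k IH] //; rewrite mconst_poly meval_polyC. Qed.

Lemma meval_mvar m i : (i < m)%N -> meval phi z (mvar R m i) = z i.
Proof.
elim: m => [|k IH] //; rewrite ltnS leq_eqVlt => /orP[/eqP->|lt_ik].
  rewrite mvar_last [LHS]/= size_polyX !big_ord_recr big_ord0 /= !coefX /=.
  by rewrite meval0 -(mconst1 k) meval_mconst rmorph1 add0r mul0r add0r mul1r expr1.
by rewrite mvar_lt // meval_polyC IH.
Qed.
End Eval.
End MpolyTheory.

(** * Linear and quadratic forms *)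

Section Forms.
Variables (R : rcfType) (n : nat).
Local Notation S := (Spoly R n).
Local Notation x := (xv R n).
Local Notation hom := (@mhomog R n.+1).

Lemma linformD (a b : 'rV[R]_n.+1) : linform (a + b) = linform a + linform b.
Proof.
rewrite /linform -big_split; apply: eq_bigr => i _.
by rewrite mxE mconstD mulrDl.
Qed.

Lemma linformZ c (a : 'rV[R]_n.+1) : linform (c *: a) = mconst n.+1 c * linform a.
Proof.
rewrite /linform mulr_sumr; apply: eq_bigr => i _.
by rewrite mxE mconstM mulrA.
Qed.

Lemma linform0 : linform (0 : 'rV[R]_n.+1) = 0.
Proof. by rewrite /linform big1 // => i _; rewrite mxE mconst0 mul0r. Qed.

Lemma mhomog_xvM d (i : 'I_n.+1) (f : S) : hom d f -> hom d.+1 (x i * f).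
Proof. exact: mhomog_mvarM. Qed.

Lemma mhomog1_xv (i : 'I_n.+1) : hom 1 (x i).
Proof.
rewrite -[x i]mulr1 -(mconst1 _ n.+1); apply: mhomog_xvM; exact: mhomog0_mconst.
Qed.

Lemma mhomog2_xvM (i j : 'I_n.+1) : hom 2 (x i * x j).
Proof. by apply: mhomog_xvM; apply: mhomog1_xv. Qed.

Lemma mhomog1_linform a : hom 1 (linform a).
Proof.
apply: mhomog_sum => i; rewrite mulrC; apply: mhomog_xvM; exact: mhomog0_mconst.
Qed.

Lemma hcomp_linformM d a (g : S) :
  hcomp d.+1 (linform a * g) = linform a * hcomp d g.
Proof.
rewrite /linform !mulr_suml hcomp_sum; apply: eq_bigr => i _.
by rewrite -mulrA hcomp_mconstM /xv (proj1 (hcomp_mvarM _ _ (ltn_ord i))) mulrA.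
Qed.

Lemma mhomog_linformM d a (g : S) : hom d g -> hom d.+1 (linform a * g).
Proof. by rewrite /mhomog hcomp_linformM => ->. Qed.

Lemma mhomog1P (u : S) : hom 1 u -> exists a, u = linform a.
Proof.
move=> /mhomogS_decomp [h [hh ->]].
have [c hc] := fin_all_exists (fun i : 'I_n.+1 => mhomog0P (hh i)).
exists (\row_(i < n.+1) c i).
by rewrite /linform; apply: eq_bigr => i _; rewrite mxE hc mulrC.
Qed.

Definition qform (M : 'M[R]_n.+1) : S := \sum_(i < n.+1) x i * linform (row i M).

Lemma mhomog2P (u : S) : hom 2 u -> exists M, qform M = u.
Proof.
move=> /mhomogS_decomp [h [hh ->]].
have [c hc] := fin_all_exists (fun i : 'I_n.+1 => mhomog1P (hh i)).
exists (\matrix_(i < n.+1) c i).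
by rewrite /qform; apply: eq_bigr => i _; rewrite rowK hc.
Qed.

Lemma qformD M1 M2 : qform (M1 + M2) = qform M1 + qform M2.
Proof.
by rewrite /qform -big_split; apply: eq_bigr => i _; rewrite linearD linformD mulrDr.
Qed.

Lemma qformZ c M : qform (c *: M) = mconst n.+1 c * qform M.
Proof.
rewrite /qform mulr_sumr; apply: eq_bigr => i _.
by rewrite linearZ linformZ mulrCA.
Qed.

Lemma qform0 : qform 0 = 0.
Proof. by rewrite /qform big1 // => i _; rewrite linear0 linform0 mulr0. Qed.

Lemma qformB M1 M2 : qform (M1 - M2) = qform M1 - qform M2.
Proof.
by apply/eqP; rewrite eq_sym subr_eq -qformD subrK.
Qed.

Lemma qform_sum (J : Type) (s : seq J) (F : J -> 'M[R]_n.+1) :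
  qform (\sum_(t <- s) F t) = \sum_(t <- s) qform (F t).
Proof.
elim: s => [|a s IH]; first by rewrite !big_nil qform0.
by rewrite !big_cons qformD IH.
Qed.

Lemma qform_outer (w b : 'rV[R]_n.+1) : qform (w^T *m b) = linform w * linform b.
Proof.
rewrite /qform [linform w]/linform mulr_suml; apply: eq_bigr => i _.
have -> : row i (w^T *m b) = w 0 i *: b.
  by apply/rowP => j; rewrite !mxE big_ord1 !mxE.
by rewrite linformZ mulrCA mulrA.
Qed.
End Forms.

(** * Positive semidefinite bilinear forms *)

Section Bilinear.
Variable R : realFieldType.

Lemma quadratic_nonneg_discr (a b c : R) : 0 <= c ->
  (forall t, 0 <= a + 2%:R * t * b + t ^+ 2 * c) -> b ^+ 2 <= a * c.
Proof.
move=> c_ge0 hq; case: (ltrgtP c 0) => hc; first by lra.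
- have := hq (- b / c); set t := - b / c => ht.
  have tc : t * c = - b by rewrite /t divfK ?gt_eqF.
  have : 0 <= (a + 2%:R * t * b + t ^+ 2 * c) * c by apply: mulr_ge0 => //; apply: ltW.
  have -> : (a + 2%:R * t * b + t ^+ 2 * c) * c = a * c + 2%:R * (t * c) * b + (t * c) ^+ 2.
    by ring.
  by rewrite tc; nra.
- rewrite hc mulr0; have [->|b_neq0] := eqVneq b 0; first by rewrite expr0n.
  exfalso; have := hq (- (a + 1) / (2%:R * b)); rewrite hc mulr0 addr0.
  have -> : 2%:R * (- (a + 1) / (2%:R * b)) * b = - (a + 1) by field.
  lra.
Qed.

Lemma norm_mul_le_sqrD (x y : R) : `|x * y| <= x ^+ 2 + y ^+ 2.
Proof.
rewrite normrM -(real_normK (num_real x)) -(real_normK (num_real y)).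
have := normr_ge0 x; have := normr_ge0 y; nra.
Qed.

Variable N : nat.
Implicit Types (B M : 'M[R]_N) (u v : 'rV[R]_N).

Definition bform B u v := (u *m B *m v^T) 0 0.

Lemma bformDl B u1 u2 v : bform B (u1 + u2) v = bform B u1 v + bform B u2 v.
Proof. by rewrite /bform !mulmxDl mxE. Qed.

Lemma bformDr B u v1 v2 : bform B u (v1 + v2) = bform B u v1 + bform B u v2.
Proof. by rewrite /bform linearD /= mulmxDr mxE. Qed.

Lemma bformZl B c u v : bform B (c *: u) v = c * bform B u v.
Proof. by rewrite /bform -!scalemxAl mxE. Qed.

Lemma bformZr B c u v : bform B u (c *: v) = c * bform B u v.
Proof. by rewrite /bform linearZ /= -scalemxAr mxE. Qed.

Lemma bformC B u v : B^T = B -> bform B u v = bform B v u.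
Proof.
move=> symB; have tr11 (A : 'M[R]_1) : A 0 0 = A^T 0 0 by rewrite mxE.
by rewrite /bform tr11 !trmx_mul trmxK symB mulmxA.
Qed.

Lemma bform_delta_r B u (k : 'I_N) : bform B u (delta_mx 0 k) = (u *m B) 0 k.
Proof. by rewrite /bform trmx_delta -colE mxE. Qed.

Lemma bform_delta B (k : 'I_N) : bform B (delta_mx 0 k) (delta_mx 0 k) = B k k.
Proof. by rewrite bform_delta_r -rowE mxE. Qed.

Definition psd B := forall u, 0 <= bform B u u.

(* Cauchy-Schwarz between [a] and the k-th basis vector. *)
Lemma psd_coord_bound B a (k : 'I_N) : psd B -> B^T = B ->
  ((a *m B) 0 k) ^+ 2 <= B k k * bform B a a.
Proof.
move=> psdB symB; apply: quadratic_nonneg_discr => // t.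
have := psdB (delta_mx 0 k + t *: a).
rewrite !bformDl !bformDr !bformZl !bformZr bform_delta (bformC _ _ symB) bform_delta_r.
by congr (_ <= _); ring.
Qed.

Lemma sym_factor_of_ker B M : B^T = B -> M^T = M ->
  (forall w : 'rV_N, w *m B = 0 -> w *m M = 0) ->
  exists Y, M = B *m Y *m B.
Proof.
move=> symB symM kerBM.
have cokerB : (cokermx B)^T *m B = 0.
  by rewrite -{2}symB -trmx_mul mulmx_coker trmx0.
have cokerM : (cokermx B)^T *m M = 0.
  apply/row_matrixP => i; rewrite row_mul row0; apply: kerBM.
  by rewrite -row_mul cokerB row0.
have subMB : (M <= B)%MS.
  by rewrite submxE; apply/eqP; rewrite -[M]symM -(trmxK (cokermx B)) -trmx_mul cokerM trmx0.
set P := pinvmx B.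
have eMr : M = M *m P *m B by rewrite mulmxKpV.
have eMl : M = B *m P^T *m M by rewrite -{1}symM {1}eMr !trmx_mul symB symM mulmxA.
by exists (P^T *m M *m P); rewrite {1}eMl {1}eMr !mulmxA.
Qed.

(* Writing M = B Y B, the form of M at [a] is a combination of products of
   coordinates of [a B], each bounded by Cauchy-Schwarz. *)
Lemma psd_dominates B M : psd B -> B^T = B -> M^T = M ->
  (forall w : 'rV_N, w *m B = 0 -> w *m M = 0) ->
  exists2 K, 0 < K & forall a, `|bform M a a| <= K * bform B a a.
Proof.
move=> psdB symB symM kerBM.
have [Y eM] := sym_factor_of_ker symB symM kerBM.
pose K0 := \sum_k \sum_l `|Y k l| * (B k k + B l l).
have diag_ge0 k : 0 <= B k k by rewrite -bform_delta.
have K0_ge0 : 0 <= K0.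
  apply: sumr_ge0 => k _; apply: sumr_ge0 => l _.
  by apply: mulr_ge0; [exact: normr_ge0 | apply: addr_ge0].
exists (1 + K0) => [|a]; first lra.
set v := a *m B; set q := bform B a a.
have q_ge0 : 0 <= q by apply: psdB.
have v_bound k : v 0 k ^+ 2 <= B k k * q by apply: psd_coord_bound.
have eMa : bform M a a = \sum_k \sum_l v 0 k * Y k l * v 0 l.
  rewrite /bform eM.
  have -> : a *m (B *m Y *m B) *m a^T = v *m Y *m v^T by rewrite /v trmx_mul symB !mulmxA.
  rewrite mxE; under eq_bigr do rewrite mxE mulr_suml.
  by rewrite exchange_big /=; apply: eq_bigr => k _; apply: eq_bigr => l _; rewrite !mxE.
rewrite eMa; apply: (le_trans (ler_norm_sum _ _ _)).
apply: (@le_trans _ _ (K0 * q)); last by rewrite mulrDl mul1r; lra.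
rewrite /K0 mulr_suml; apply: ler_sum => k _; rewrite mulr_suml.
apply: (le_trans (ler_norm_sum _ _ _)); apply: ler_sum => l _.
rewrite mulrAC normrM mulrC -mulrA; apply: ler_wpM2l; first exact: normr_ge0.
apply: (le_trans (norm_mul_le_sqrD _ _)); have := v_bound k; have := v_bound l; lra.
Qed.
End Bilinear.

(** * Functionals on quadratic forms *)

Section Dual2.
Variables (R : rcfType) (n : nat).
Local Notation S := (Spoly R n).
Local Notation x := (xv R n).
Variable l : S -> R.
Hypothesis l_dual : is_dual2 l.

Lemma dual2_0 : l 0 = 0.
Proof.
by have := (proj2 l_dual) 0 0 (mhomog0 _ _ _); rewrite mconst0 mul0r mul0r.
Qed.

Lemma dual2_sum (I : Type) (s : seq I) (F : I -> S) :
  (forall t, hom2 (F t)) -> l (\sum_(t <- s) F t) = \sum_(t <- s) l (F t).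
Proof.
move=> hF; elim: s => [|a s IH]; first by rewrite !big_nil dual2_0.
by rewrite !big_cons (proj1 l_dual) ?IH //; apply: mhomog_sum.
Qed.

Lemma dual2N q : hom2 q -> l (- q) = - l q.
Proof.
move=> hq; rewrite -mulN1r -(mconst1 _ n.+1) -mconstN (proj2 l_dual) //.
by rewrite mulN1r.
Qed.

Lemma dual2B q1 q2 : hom2 q1 -> hom2 q2 -> l (q1 - q2) = l q1 - l q2.
Proof. by move=> h1 h2; rewrite (proj1 l_dual) ?dual2N //; apply: mhomogN. Qed.

Lemma dual2_qform M : l (qform M) = \sum_i \sum_j M i j * l (x i * x j).
Proof.
rewrite /qform dual2_sum; last by move=> i; apply: mhomog_xvM; apply: mhomog1_linform.
apply: eq_bigr => i _; rewrite /linform mulr_sumr dual2_sum.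
  apply: eq_bigr => j _; rewrite mxE mulrCA (proj2 l_dual) //; exact: mhomog2_xvM.
by move=> j; rewrite mulrCA; apply: mhomog_mconstM; apply: mhomog2_xvM.
Qed.

Lemma dual2_outer (w b : 'rV[R]_n.+1) :
  l (linform w * linform b) = bform (Bmx l) w b.
Proof.
rewrite -qform_outer dual2_qform /bform.
have -> : (w *m Bmx l *m b^T) 0 0 =
    \sum_i \sum_j w 0 i * b 0 j * l (x i * x j).
  rewrite mxE (eq_bigr (fun j => \sum_i w 0 i * b 0 j * l (x i * x j))); last first.
    by move=> j _; rewrite !mxE mulr_suml; apply: eq_bigr => i _; rewrite !mxE; ring.
  exact: exchange_big.
apply: eq_bigr => i _; apply: eq_bigr => j _.
by rewrite !mxE big_ord1 !mxE.
Qed.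

Lemma Bmx_sym : (Bmx l)^T = Bmx l.
Proof. by apply/matrixP => i j; rewrite !mxE mulrC. Qed.

Lemma dual2_sos (s : seq 'rV[R]_n.+1) :
  l (\sum_(a <- s) linform a ^+ 2) = \sum_(a <- s) bform (Bmx l) a a.
Proof.
rewrite dual2_sum; first by apply: eq_bigr => a _; rewrite expr2 dual2_outer.
by move=> a; rewrite expr2; apply: mhomog_linformM; apply: mhomog1_linform.
Qed.
End Dual2.

Lemma dual2_of_mxfun (R : rcfType) (n : nat) (f : 'M[R]_n.+1 -> R) :
  (forall M M', f (M + M') = f M + f M') -> (forall c M, f (c *: M) = c * f M) ->
  (forall M, qform M = 0 -> f M = 0) ->
  exists2 m : Spoly R n -> R, is_dual2 m & forall M, m (qform M) = f M.
Proof.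
move=> fD fZ f_ker.
have fB M M' : f (M - M') = f M - f M' by rewrite fD -scaleN1r fZ mulN1r.
pose m u := f (epsilon (inhabits 0) (fun M => qform M = u)).
have m_qform M : m (qform M) = f M.
  rewrite /m; set M' := epsilon _ _.
  have eM' : qform M' = qform M.
    by apply: (epsilon_spec (inhabits 0) (fun M0 => qform M0 = qform M)); exists M.
  by apply/eqP; rewrite -subr_eq0 -fB f_ker // qformB eM' subrr.
exists m => //; split => [q1 q2 /mhomog2P [M1 <-] /mhomog2P [M2 <-]|c q /mhomog2P [M <-]].
  by rewrite -qformD !m_qform fD.
by rewrite -qformZ !m_qform fZ.
Qed.

(** * Linear algebra over a field *)

Section Separation.
Variables (F : fieldType) (D : nat) (P : 'rV[F]_D -> Prop).
Hypotheses (P0 : P 0) (PD : forall u v, P u -> P v -> P (u + v))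
  (PZ : forall c u, P u -> P (c *: u)).

Lemma closed_pred_submx k (U : 'M[F]_(k, D)) : (forall i, P (row i U)) ->
  forall u, (u <= U)%MS -> P u.
Proof.
move=> PU u /submxP [y ->]; rewrite mulmx_sum_row.
by apply: (big_ind P) => // i _; apply: PZ.
Qed.

(* Adjoin vectors of [P] outside the current span until it is exhausted;
   the rank grows at each step, so this stops before rank D.+1. *)
Lemma closed_pred_rank_or_span j :
  (exists k (U : 'M[F]_(k, D)), (forall i, P (row i U)) /\ (j <= \rank U)%N) \/
  (exists k (U : 'M[F]_(k, D)), (forall i, P (row i U)) /\ forall u, P u -> (u <= U)%MS).
Proof.
elim: j => [|j [[k [U [PU rkU]]]|]]; last by right.
  by left; exists 0%N, 0; split => // i; case: i.
case: (classic (forall u, P u -> (u <= U)%MS)) => spanU; first by right; exists k, U.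
left; have [u [Pu notUu]] : exists u, P u /\ ~~ (u <= U)%MS.
  apply: NNPP => none; apply: spanU => u Pu; apply: NNPP => notUu; apply: none.
  by exists u; split => //; apply/negP.
exists (k + 1)%N, (col_mx U u); split.
  move=> i; case: (split_ordP i) => l ->; first by rewrite rowKu.
  by rewrite rowKd; have -> : row l u = u by apply/rowP => m; rewrite mxE (ord1 l).
have ltU : (U < col_mx U u)%MS.
  have leU : (U <= col_mx U u)%MS by rewrite -(addsmxE U u) addsmxSl.
  by rewrite ltmxE leU /= col_mx_sub negb_and notUu orbT.
exact: leq_trans (rank_ltmx ltU).
Qed.

Lemma linear_separation v : ~ P v ->
  exists2 mu : 'cV[F]_D, (forall u, P u -> u *m mu = 0) & v *m mu != 0.
Proof.
move=> notPv; have [[k [U [_ rkU]]]|[k [U [PU spanU]]]] := closed_pred_rank_or_span D.+1.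
  by have := rank_leq_col U; lia.
have : ~~ (v <= U)%MS by apply/negP => /(closed_pred_submx PU); apply: notPv.
rewrite submxE => vU.
have [j hj] : exists j, (v *m cokermx U) 0 j != 0.
  case: (pickP (fun j => (v *m cokermx U) 0 j != 0)) => [j hj|allz]; first by exists j.
  exfalso; move/negP: vU; apply; apply/eqP/rowP => j.
  by move: (allz j) => /negbFE /eqP ->; rewrite mxE.
exists (col j (cokermx U)).
  move=> u /spanU; rewrite submxE => /eqP uU.
  by rewrite colE mulmxA uU mul0mx.
apply/eqP => h; move/eqP: hj; apply.
by move: (congr1 (fun A : 'M[F]_1 => A 0 0) h); rewrite colE mulmxA -colE !mxE.
Qed.
End Separation.

Section LeftKernel.
Variables (F : fieldType) (N : nat) (B : 'M[F]_N).

Definition lkerv : {vspace 'rV[F]_N} :=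
  lker (linfun (mulmxr B) : 'Hom('rV[F]_N, 'rV[F]_N)).

Lemma mem_lkerv w : (w \in lkerv) = (w *m B == 0).
Proof. by rewrite memv_ker lfunE. Qed.

Lemma lkerv_codim : (N - \dim lkerv <= \rank B)%N.
Proof.
set f := (linfun (mulmxr B) : 'Hom('rV[F]_N, 'rV[F]_N)).
have rank_nullity := limg_ker_dim f fullv.
rewrite capfv dimvf dim_matrix mul1r in rank_nullity.
set X := [seq row i (row_base B) | i <- enum 'I_(\rank B)].
have imgX : (f @: fullv <= <<X>>)%VS.
  apply/subvP => u /memv_imgP [w _ ->]; rewrite lfunE /=.
  have : (w *m B <= row_base B)%MS by rewrite eq_row_base submxMl.
  case/submxP => y ->; rewrite mulmx_sum_row; apply: memv_suml => i _.
  by apply: memvZ; apply: memv_span; apply: map_f; rewrite mem_enum.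
have := dimvS imgX; have := dim_span X; rewrite size_map size_enum_ord.
rewrite /lkerv -/f => spanX imgf; rewrite -{1}rank_nullity addKn.
exact: leq_trans imgf spanX.
Qed.
End LeftKernel.

(** * Extreme rays of the Hankel spectrahedron *)

Section ExtremeRays.
Variables (R : rcfType) (n : nat) (I : Spoly R n -> Prop).
Local Notation S := (Spoly R n).

Lemma in_sos_dual_psd (l : S -> R) : in_sos_dual I l -> psd (Bmx l).
Proof. by case=> l_dual _ l_sos u; have := l_sos [:: u]; rewrite dual2_sos // big_seq1. Qed.

Lemma in_sos_dual_avg (l m : S -> R) (s : R) :
  is_dual2 l -> is_dual2 m ->
  (forall q, hom2 q -> I q -> l q = 0) -> (forall q, hom2 q -> I q -> m q = 0) ->
  (forall a, 0 <= bform (Bmx l) a a + s * bform (Bmx m) a a) ->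
  in_sos_dual I (fun u => (l u + s * m u) / 2%:R).
Proof.
move=> l_dual m_dual lI mI lsm_psd; split.
- split => [q1 q2 h1 h2|c q h].
    by rewrite (proj1 l_dual) // (proj1 m_dual) //; ring.
  by rewrite (proj2 l_dual) // (proj2 m_dual) //; ring.
- by move=> q hq Iq; rewrite lI // mI // mulr0 addr0 mul0r.
move=> t; rewrite (dual2_sos l_dual) (dual2_sos m_dual) mulr_sumr -big_split /=.
by apply: divr_ge0; [apply: sumr_ge0 => a _ | rewrite ler0n].
Qed.

(* For small e > 0 both l + e m and l - e m stay in the cone, by [psd_dominates];
   extremality then forces m to be proportional to l on S_2. *)
Lemma extreme_ray_zeros (l m : S -> R) : extreme_ray I l -> is_dual2 m ->
  (forall q, hom2 q -> I q -> m q = 0) ->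
  (forall w : 'rV_n.+1, w *m Bmx l = 0 -> w *m Bmx m = 0) ->
  forall q, hom2 q -> l q = 0 -> m q = 0.
Proof.
case=> l_sos _ l_extreme m_dual mI kerlm q hq lq0.
have [l_dual lI _] := l_sos.
have [K K_gt0 Kbound] :=
  psd_dominates (in_sos_dual_psd l_sos) (Bmx_sym l) (Bmx_sym m) kerlm.
pose e := K^-1.
have e_gt0 : 0 < e by rewrite invr_gt0.
have perturb_psd a : 0 <= bform (Bmx l) a a + e * bform (Bmx m) a a /\
                     0 <= bform (Bmx l) a a + (- e) * bform (Bmx m) a a.
  have := Kbound a; set y := bform (Bmx m) a a; set u := bform (Bmx l) a a => yu.
  have ey_le : e * `|y| <= u.
    have : e * `|y| <= e * (K * u) by apply: ler_wpM2l => //; apply: ltW.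
    by rewrite mulrA mulVf ?gt_eqF // mul1r.
  have := ler_norm y; have := ler_norm (- y); rewrite normrN => hy1 hy2.
  have : e * y <= e * `|y| by apply: ler_wpM2l => //; apply: ltW.
  have : e * (- y) <= e * `|y| by apply: ler_wpM2l => //; apply: ltW.
  rewrite mulrN mulNr; split; lra.
pose l1 u := (l u + e * m u) / 2%:R.
pose l2 u := (l u + (- e) * m u) / 2%:R.
have l1_sos : in_sos_dual I l1 by apply: in_sos_dual_avg => // a; case: (perturb_psd a).
have l2_sos : in_sos_dual I l2 by apply: in_sos_dual_avg => // a; case: (perturb_psd a).
have l_split : eq2 l (fun u => l1 u + l2 u).
  by move=> u _; rewrite /l1 /l2; field.
have [c _ l1_prop] := l_extreme l1 l2 l1_sos l2_sos l_split.
have := l1_prop q hq; rewrite /l1 lq0 mulr0 add0r => /eqP.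
by rewrite mulf_eq0 invr_eq0 pnatr_eq0 orbF mulf_eq0 gt_eqF //= => /eqP.
Qed.
End ExtremeRays.

Section ZerosAtPoint.
Variables (R : rcfType) (n : nat) (I : Spoly R n -> Prop).
Variables (C : closedFieldType) (phi : {rmorphism R -> C}) (z : nat -> C).
Local Notation E := (@meval _ _ phi n.+1 z).
Hypothesis I_ideal : is_ideal I.
Hypothesis z_zero_I : forall f, I f -> E f = 0.
Variable l : Spoly R n -> R.
Hypothesis l_extreme : extreme_ray I l.
Local Notation W := (lkerv (Bmx l)).
Hypothesis z_zero_W : forall w, w \in W -> E (linform w) = 0.

(* Matrix coordinates of the quadratic part of the ideal generated by I and W. *)
Definition in_ideal_lkerv (M : 'M[R]_n.+1) := exists M1 (s : seq ('rV[R]_n.+1 * 'rV[R]_n.+1)),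
  [/\ I (qform M1), (forall t, t \in s -> t.1 \in W) & M = M1 + \sum_(t <- s) t.1^T *m t.2].

Lemma in_ideal_lkerv0 : in_ideal_lkerv 0.
Proof.
exists 0, [::]; split => //; first by rewrite qform0; case: I_ideal.
by rewrite big_nil addr0.
Qed.

Lemma in_ideal_lkervD M M' :
  in_ideal_lkerv M -> in_ideal_lkerv M' -> in_ideal_lkerv (M + M').
Proof.
case=> [M1 [s [IM1 sW ->]]] [M1' [s' [IM1' s'W ->]]].
exists (M1 + M1'), (s ++ s'); split.
- by rewrite qformD; case: I_ideal => _ ID _; apply: ID.
- by move=> t; rewrite mem_cat => /orP[]; [apply: sW | apply: s'W].
by rewrite big_cat /= addrACA.
Qed.

Lemma in_ideal_lkervZ c M : in_ideal_lkerv M -> in_ideal_lkerv (c *: M).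
Proof.
case=> [M1 [s [IM1 sW ->]]].
exists (c *: M1), [seq (c *: t.1, t.2) | t <- s]; split.
- by rewrite qformZ; case: I_ideal => _ _ IM; apply: IM.
- by move=> t /mapP [t' t's ->] /=; apply: memvZ; apply: sW.
rewrite big_map scalerDr scaler_sumr; congr (_ + _); apply: eq_bigr => t _ /=.
by rewrite linearZ /= scalemxAl.
Qed.

Lemma meval_qform_ideal_lkerv M : in_ideal_lkerv M -> E (qform M) = 0.
Proof.
case=> [M1 [s [IM1 sW ->]]].
rewrite qformD qform_sum mevalD z_zero_I // add0r meval_sum big_seq big1 // => t ts.
by rewrite qform_outer mevalM z_zero_W ?mul0r //; apply: sW.
Qed.

(* A functional separating q from I_2 + W S_1 kills W, so [extreme_ray_zeros]
   applies to it. *)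
Lemma extreme_ray_zero_at_point q : hom2 q -> l q = 0 -> E q = 0.
Proof.
move=> hq lq0; apply: NNPP => Eq_neq0.
have [Mq eMq] := mhomog2P hq.
pose P v := in_ideal_lkerv (vec_mx v).
have notPq : ~ P (mxvec Mq) by rewrite /P mxvecK => /meval_qform_ideal_lkerv; rewrite eMq.
have [|u v|c u|mu P_mu Mq_mu] := linear_separation _ _ _ notPq.
- by rewrite /P linear0; apply: in_ideal_lkerv0.
- by rewrite /P linearD; apply: in_ideal_lkervD.
- by rewrite /P linearZ; apply: in_ideal_lkervZ.
pose f (M : 'M[R]_n.+1) := (mxvec M *m mu) 0 0.
have f_IW M : in_ideal_lkerv M -> f M = 0.
  by move=> IWM; rewrite /f P_mu ?mxE // /P mxvecK.
have [||M qM0|m m_dual m_qform] := @dual2_of_mxfun R n f.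
- by move=> M M'; rewrite /f linearD mulmxDl mxE.
- by move=> c M; rewrite /f linearZ /= -scalemxAl mxE.
- apply: f_IW; exists M, [::]; rewrite big_nil addr0 qM0; split => //.
  by case: I_ideal.
have mI u : hom2 u -> I u -> m u = 0.
  move=> /mhomog2P [M <-] IM; rewrite m_qform; apply: f_IW.
  by exists M, [::]; split => //; rewrite big_nil addr0.
have kerlm (w : 'rV_n.+1) : w *m Bmx l = 0 -> w *m Bmx m = 0.
  move=> wBl; apply/rowP => j; rewrite [RHS]mxE -bform_delta_r -(dual2_outer m_dual).
  rewrite -qform_outer m_qform; apply: f_IW; exists 0, [:: (w, delta_mx 0 j)]; split.
  - by rewrite qform0; case: I_ideal.
  - by move=> t; rewrite inE => /eqP -> /=; rewrite mem_lkerv wBl.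
  by rewrite big_seq1 add0r.
have := extreme_ray_zeros l_extreme m_dual mI kerlm hq lq0.
rewrite -eMq m_qform /f => fq0; move/negP: Mq_mu; apply.
by apply/eqP/matrixP => i j; rewrite (ord1 i) (ord1 j) fq0 mxE.
Qed.
End ZerosAtPoint.

(** * Base-point-freeness of the kernel of an extreme ray *)

Section KernelOfExtremeRay.
Variables (R : rcfType) (C : closedFieldType) (phi : {rmorphism R -> C}) (n : nat).
Local Notation x := (xv R n).

Definition extend_point (z : 'I_n.+1 -> C) (k : nat) : C :=
  if (k < n.+1)%N then z (inord k) else 0.

Lemma meval_xv (z : 'I_n.+1 -> C) (j : 'I_n.+1) :
  meval phi (extend_point z) (x j) = z j.
Proof. by rewrite /xv meval_mvar // /extend_point ltn_ord inord_val. Qed.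

(* With a := l(x_i^2) <> 0, the forms a x_j x_k - B_jk x_i^2 are zeros of l,
   so B is proportional to the rank-one matrix z^T z. *)
Lemma rank_Bmx_le1 (l : Spoly R n -> R) (z : 'I_n.+1 -> C) (i : 'I_n.+1) :
  is_dual2 l -> z i != 0 ->
  (forall q, hom2 q -> l q = 0 -> meval phi (extend_point z) q = 0) ->
  (rank_of l <= 1)%N.
Proof.
move=> l_dual zi_neq0 zeros_l.
set B := Bmx l; pose a := l (x i * x i).
have a_neq0 : a != 0.
  apply/eqP => a0; have := zeros_l _ (mhomog2_xvM _ i i) a0.
  by rewrite mevalM !meval_xv; apply/eqP; rewrite mulf_neq0.
have minor0 (j k : 'I_n.+1) : phi a * (z j * z k) = phi (B j k) * (z i * z i).
  pose q := mconst n.+1 a * (x j * x k) - mconst n.+1 (B j k) * (x i * x i).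
  have hq : hom2 q by apply: mhomogB; apply: mhomog_mconstM; apply: mhomog2_xvM.
  have lq0 : l q = 0.
    rewrite /q (dual2B l_dual); try by apply: mhomog_mconstM; apply: mhomog2_xvM.
    rewrite !(proj2 l_dual); try exact: mhomog2_xvM.
    by rewrite /a /B mxE; ring.
  have := zeros_l _ hq lq0.
  rewrite /q mevalB !mevalM !meval_mconst !meval_xv => /eqP.
  by rewrite subr_eq0 => /eqP.
have phia_neq0 : phi a != 0 by rewrite fmorph_eq0.
pose c := (z i * z i) / phi a.
have c_neq0 : c != 0 by rewrite mulf_neq0 ?invr_eq0 ?mulf_neq0.
have outer_z : (\col_j z j) *m (\row_k z k) = c *: map_mx phi B.
  apply/matrixP => j k; rewrite !mxE big_ord1 !mxE.
  apply: (mulfI phia_neq0); rewrite minor0 /c.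
  have -> : l (x j * x k) = B j k by rewrite /B mxE.
  by move: (phi a) (phi (B j k)) phia_neq0 => u v u_neq0; field.
have := mxrankM_maxl (\col_j z j) (\row_k z k).
rewrite outer_z mxrank_scale_nz // mxrank_map => rkB.
exact: leq_trans rkB (rank_leq_col _).
Qed.

Lemma lkerv_base_point_free (I : Spoly R n -> Prop) (l : Spoly R n -> R) :
  is_ideal I -> extreme_ray I l -> (1 < rank_of l)%N ->
  base_point_free phi I (lkerv (Bmx l)).
Proof.
move=> I_ideal l_extreme rank_gt1 z [[i zi_neq0] z_zero_I].
apply: NNPP => no_w; have [[l_dual _ _] _ _] := l_extreme.
have z_zero_W w : w \in lkerv (Bmx l) -> meval phi (extend_point z) (linform w) = 0.
  by move=> wW; apply: NNPP => Ew; apply: no_w; exists w => //; apply/eqP.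
have := rank_Bmx_le1 l_dual zi_neq0
  (extreme_ray_zero_at_point I_ideal z_zero_I l_extreme z_zero_W).
by rewrite leqNgt rank_gt1.
Qed.

Lemma in_sos_dual_eq0 (I : Spoly R n -> Prop) (l : Spoly R n -> R) :
  is_homogeneous_ideal I -> in_sos_dual I l ->
  ideal_gen_contains_R2 I (lkerv (Bmx l)) -> eq2 l (fun _ => 0).
Proof.
move=> [_ I_hom] [l_dual lI _] R2_in q hq; have [s [sW Iqs]] := R2_in q hq.
pose g := \sum_(t <- s) linform t.1 * hcomp 1 t.2.
have hg : hom2 g.
  by apply: mhomog_sum => t; apply: mhomog_linformM; apply: mhomog_hcomp.
have Iqg : I (q - g).
  have := I_hom _ 2 Iqs; rewrite hcompB hq hcomp_sum.
  by under eq_bigr do rewrite hcomp_linformM.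
have hqg : hom2 (q - g) by exact: mhomogB.
rewrite -(subrK g q) (proj1 l_dual) // (lI _ hqg Iqg) add0r /g.
rewrite (dual2_sum l_dual); last by move=> t; apply: mhomog_linformM; apply: mhomog_hcomp.
rewrite big_seq big1 // => t ts; have [b ->] := mhomog1P (mhomog_hcomp 1 t.2).
have := sW t ts; rewrite mem_lkerv => /eqP wB0.
by rewrite dual2_outer // /bform wB0 !mul0mx mxE.
Qed.
End KernelOfExtremeRay.

Theorem theorem2p2 (R : rcfType) (C : closedFieldType) (phi : {rmorphism R -> C})
    (n : nat) (I : Spoly R n -> Prop) (p : nat) :
  is_subscheme_ideal I ->
  nondegenerate_scheme I ->
  (1 <= p)%N ->
  p_bpf_property phi I p ->
  hankel_index_ge I p.+1.
Proof.
move=> [I_hom _] _ _ p_bpf r r_gt1 [l [l_extreme rank_l]].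
rewrite leqNgt; apply/negP => r_le_p.
have [l_sos l_neq0 _] := l_extreme.
apply: l_neq0; apply: (in_sos_dual_eq0 I_hom l_sos); apply: p_bpf.
- by apply: leq_trans (lkerv_codim (Bmx l)) _; rewrite -/(rank_of l) rank_l -ltnS.
- by apply: lkerv_base_point_free => //; [case: I_hom | rewrite rank_l].
Qed.
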